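(* Let $G$ be a finite simple graph with threshold assignment $\tau$. Let $H$ be a triangle-free $\tau$-resistant subgraph of $G$ and let $uv$ be an edge with $u,v\in V(H)$. Define $\tau'$ by $\tau'(w)=\tau(w)$ for $w\notin V(H)$, $\tau'(w)=0$ for $w\in V(H)\setminus\{u,v\}$, $\tau'(v)=deg_G(v)$ and $\tau'(u)=deg_G(u)$. Then $\overline{\tau'}\le\overline{\tau}$.
   Context: A threshold assignment is a function $\tau:V(G)\to\{0,1,2,\dots\}$ with average $\overline{\tau}=\sum_v\tau(v)/|V(G)|$. An induced subgraph $K$ of $G$ is $\tau$-resistant if $deg_K(v)\ge deg_G(v)-\tau(v)+1$ for every vertex $v\in K$. *)

From mathcomp Require Import all_boot all_order all_algebra.
Set Implicit Arguments. Unset Strict Implicit. Unset Printing Implicit Defensive.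
Import Order.TTheory GRing.Theory Num.Theory.

Definition simple_graph (T : finType) (e : rel T) : Prop :=
  symmetric e /\ irreflexive e.

Definition deg (T : finType) (e : rel T) (v : T) : nat := #|[set w | e v w]|.

Definition deg_in (T : finType) (e : rel T) (K : {set T}) (v : T) : nat :=
  #|[set w in K | e v w]|.

Definition avg (T : finType) (tau : T -> nat) : rat :=
  ((\sum_(v : T) tau v)%:R / #|T|%:R)%R.

Definition resistant (T : finType) (e : rel T) (tau : T -> nat) (K : {set T}) : Prop :=
  forall v, v \in K -> ((deg e v)%:Z - (tau v)%:Z + 1 <= (deg_in e K v)%:Z)%R.

Definition triangle_free (T : finType) (e : rel T) (K : {set T}) : Prop :=
  forall x y z, x \in K -> y \in K -> z \in K -> ~ [&& e x y, e y z & e x z].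

Definition tau' (T : finType) (e : rel T) (tau : T -> nat) (H : {set T}) (u v : T) (w : T) : nat :=
  if w \notin H then tau w
  else if w == u then deg e u
  else if w == v then deg e v
  else 0.

From mathcomp Require Import all_boot all_order all_algebra.
From mathcomp Require Import zify.
Import Order.TTheory GRing.Theory Num.Theory.

Set Implicit Arguments.
Unset Strict Implicit.
Unset Printing Implicit Defensive.

(* Resistance forces [tau w >= deg w - deg_K w + 1 >= 1] on [K].  For an edge
   [uv] of a triangle-free [K] the [K]-neighbourhoods of [u] and [v] are
   disjoint, so [deg_K u + deg_K v <= |K|]; summing the resistance inequalities
   at [u] and [v] then gives [deg u + deg v <= sum_(w in K) tau w], which is
   exactly the total that [tau'] moves onto [u] and [v]. *)

Lemma avg_le (T : finType) (f g : T -> nat) :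
  \sum_w f w <= \sum_w g w -> (avg f <= avg g)%R.
Proof. by move=> le_fg; rewrite /avg ler_wpM2r ?invr_ge0 ?ler0n ?ler_nat. Qed.

Lemma deg_in_le_deg (T : finType) (e : rel T) (K : {set T}) (w : T) :
  deg_in e K w <= deg e w.
Proof. by apply/subset_leq_card/subsetP => x; rewrite !inE => /andP[]. Qed.

Section Resistant.

Variables (T : finType) (e : rel T) (tau : T -> nat) (K : {set T}).
Hypothesis resK : resistant e tau K.

Lemma resistant_deg (w : T) : w \in K -> deg e w < tau w + deg_in e K w.
Proof. by move=> Kw; have := resK Kw; lia. Qed.

Lemma resistant_tau_gt0 (w : T) : w \in K -> 0 < tau w.
Proof. by move=> Kw; have := resistant_deg Kw; have := deg_in_le_deg e K w; lia. Qed.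

Lemma resistant_card_le_sum (A : {set T}) :
  A \subset K -> #|A| <= \sum_(w in A) tau w.
Proof.
move=> /subsetP sAK; rewrite -sum1_card; apply: leq_sum => w Aw.
exact: resistant_tau_gt0 (sAK w Aw).
Qed.

End Resistant.

Lemma triangle_free_deg_in_edge (T : finType) (e : rel T) (K : {set T}) (u v : T) :
  triangle_free e K -> u \in K -> v \in K -> e u v ->
  deg_in e K u + deg_in e K v <= #|K|.
Proof.
move=> triK Ku Kv euv.
have disj : [set w in K | e u w] :&: [set w in K | e v w] = set0.
  apply/setP => w; rewrite !inE; apply/negP => /andP[/andP[Kw euw] /andP[_ evw]].
  by apply: (triK u v w Ku Kv Kw); rewrite euv evw euw.
rewrite /deg_in -cardsUI disj cards0 addn0; apply/subset_leq_card/subsetP => w.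
by rewrite !inE => /orP[] /andP[].
Qed.

Lemma edge_deg_le_sum_tau (T : finType) (e : rel T) (tau : T -> nat)
    (K : {set T}) (u v : T) :
  irreflexive e -> resistant e tau K -> triangle_free e K ->
  u \in K -> v \in K -> e u v ->
  deg e u + deg e v <= \sum_(w in K) tau w.
Proof.
move=> eirr resK triK Ku Kv euv.
have uv : u != v by apply: contraTneq euv => ->; rewrite eirr.
have Kuv : v \in K :\ u by rewrite !inE eq_sym uv.
have cardK : #|K :\ u :\ v| + 2 = #|K|.
  by rewrite (cardsD1 u K) (cardsD1 v (K :\ u)) Ku Kuv; lia.
have sumK : tau u + tau v + #|K :\ u :\ v| <= \sum_(w in K) tau w.
  rewrite (big_setD1 u Ku) /= (big_setD1 v Kuv) /= -addnA !leq_add2l.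
  exact/(resistant_card_le_sum resK)/(subset_trans (subD1set _ _) (subD1set _ _)).
have := resistant_deg resK Ku; have := resistant_deg resK Kv.
have := triangle_free_deg_in_edge triK Ku Kv euv; lia.
Qed.

Lemma sum_tau' (T : finType) (e : rel T) (tau : T -> nat) (H : {set T}) (u v : T) :
  u \in H -> v \in H -> u != v ->
  \sum_w tau' e tau H u v w = \sum_(w | w \notin H) tau w + (deg e u + deg e v).
Proof.
move=> Hu Hv uv; rewrite (bigID (fun w => w \notin H)) /=; congr (_ + _).
  by apply: eq_bigr => w Hw; rewrite /tau' Hw.
rewrite (bigD1 u) ?negbK //= (bigD1 v) /=; last by rewrite negbK Hv eq_sym.
rewrite big1 => [|w /andP[/andP[/negPn Hw wu] wv]].
  by rewrite /tau' Hu Hv /= eqxx eq_sym (negbTE uv) eqxx addn0.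
by rewrite /tau' Hw (negbTE wu) (negbTE wv).
Qed.

Theorem lemma2 (T : finType) (e : rel T) (tau : T -> nat) (H : {set T}) (u v : T) :
  simple_graph e ->
  resistant e tau H ->
  triangle_free e H ->
  u \in H -> v \in H -> e u v ->
  (avg (tau' e tau H u v) <= avg tau)%R.
Proof.
move=> [_ eirr] resH triH Hu Hv euv.
have uv : u != v by apply: contraTneq euv => ->; rewrite eirr.
apply: avg_le; rewrite sum_tau' // [X in _ <= X](bigID (fun w => w \notin H)) /=.
under [X in _ <= _ + X]eq_bigl do rewrite negbK.
by rewrite leq_add2l (edge_deg_le_sum_tau eirr resH triH).
Qed.
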